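(* Let $\xi\in\mathbb{R}\setminus\mathbb{Q}$, let $n\ge1$ be an integer, and let $q$ be the denominator of a convergent of the continued fraction expansion of $\xi$. Then the last (i.e. $(n+1)$-st) successive minimum of the convex body $\mathcal{C}(q)$ with respect to the lattice $\mathbb{Z}[T]_{\le n}$ is $\le 2^n$, and its first successive minimum is $\ge \left(2^{n^2}(n+1)!\right)^{-1}$. Moreover, the convex body $2^n\mathcal{C}(q)$ contains a basis of $\mathbb{Z}[T]_{\le n}$ over $\mathbb{Z}$.
   Context: $\mathbb{R}[T]_{\le n}$ denotes the real vector space of polynomials in $\mathbb{R}[T]$ of degree $\le n$, and $\mathbb{Z}[T]_{\le n}$ its subgroup of polynomials with integer coefficients (a lattice of rank $n+1$, identified with $\mathbb{Z}^{n+1}$ via coefficients). For $P \in \mathbb{R}[T]$ and $k\ge0$, $P^{[k]}(\xi) = P^{(k)}(\xi)/k!$ is the $k$-th divided derivative (the coefficient of $(T-\xi)^k$ in the Taylor expansion of $P$ at $\xi$). For an integer $q\ge1$, $\mathcal{C}(q)$ is the convex body of all $P \in \mathbb{R}[T]_{\le n}$ with $|P^{[k]}(\xi)| \le q^{2k-n}$ for $0\le k\le n$. The successive minima $\lambda_1\le\dots\le\lambda_{n+1}$ of a convex body $\mathcal{C}$ with respect to a lattice $\Lambda$ are defined by: $\lambda_i$ is the smallest $\lambda>0$ such that $\lambda\mathcal{C}$ contains $i$ linearly independent elements of $\Lambda$. *)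

From Stdlib Require Import Reals ZArith Arith Lia.
Open Scope R_scope.

Fixpoint sumR (i : nat) (f : nat -> R) : R :=
  match i with O => 0 | S i' => sumR i' f + f i' end.
Fixpoint sumZ (i : nat) (f : nat -> Z) : Z :=
  match i with O => 0%Z | S i' => (sumZ i' f + f i')%Z end.

(* complete quotients: x_0 = x, x_{k+1} = 1/(x_k - floor x_k) ;
   Int_part is the floor function *)
Fixpoint cf_complete (x : R) (k : nat) : R :=
  match k with
  | O => x
  | S k' => / (cf_complete x k' - IZR (Int_part (cf_complete x k')))
  end.
Definition cf_partial (x : R) (k : nat) : Z := Int_part (cf_complete x k).
(* (q_k, q_{k-1}) with q_{-1} = 0, q_0 = 1, q_{k+1} = a_{k+1} q_k + q_{k-1} *)
Fixpoint cf_denoms (x : R) (k : nat) : Z * Z :=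
  match k with
  | O => (1%Z, 0%Z)
  | S k' => let (a, b) := cf_denoms x k' in
            ((cf_partial x (S k') * a + b)%Z, a)
  end.
Definition convergent_denominator (x : R) (k : nat) : Z := fst (cf_denoms x k).
Definition is_convergent_denominator (x : R) (q : Z) : Prop :=
  exists k, convergent_denominator x k = q.

Definition irrational (x : R) : Prop :=
  ~ exists p r : Z, r <> 0%Z /\ x = IZR p / IZR r.

(* ---- polynomials of degree <= n with integer coefficients ----
   represented by their coefficient functions a : nat -> Z, where only the
   coefficients a 0, ..., a n are relevant: P = sum_{j<=n} a_j T^j. *)

Definition divderiv (xi : R) (n : nat) (a : nat -> Z) (k : nat) : R :=
  sumR (S n) (fun j => if Nat.leb k j
                       then C j k * IZR (a j) * xi ^ (j - k) else 0).

(* P belongs to lam * C(q), i.e. |P^[k](xi)| <= lam q^(2k-n) for 0<=k<=n *)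
Definition in_scaled_body (xi : R) (n : nat) (q : Z) (lam : R) (a : nat -> Z) : Prop :=
  forall k, (k <= n)%nat ->
    Rabs (divderiv xi n a k) <= lam * powerRZ (IZR q) (2 * Z.of_nat k - Z.of_nat n).

Definition lin_indep (n i : nat) (fam : nat -> nat -> Z) : Prop :=
  forall c : nat -> R,
    (forall j, (j <= n)%nat -> sumR i (fun m => c m * IZR (fam m j)) = 0) ->
    forall m, (m < i)%nat -> c m = 0.

Definition Z_basis (n : nat) (fam : nat -> nat -> Z) : Prop :=
  lin_indep n (S n) fam /\
  forall a : nat -> Z, exists c : nat -> Z,
    forall j, (j <= n)%nat -> a j = sumZ (S n) (fun m => (c m * fam m j)%Z).

Definition minima_set (xi : R) (n : nat) (q : Z) (i : nat) (lam : R) : Prop :=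
  0 < lam /\ exists fam : nat -> nat -> Z,
    lin_indep n i fam /\ forall m, (m < i)%nat -> in_scaled_body xi n q lam (fam m).

Definition is_inf (E : R -> Prop) (l : R) : Prop :=
  (forall x, E x -> l <= x) /\ (forall b, (forall x, E x -> b <= x) -> b <= l).

Definition successive_minimum (xi : R) (n : nat) (q : Z) (i : nat) (lam : R) : Prop :=
  is_inf (minima_set xi n q i) lam.

(* Let p/q and p0/q0 be consecutive convergents of the irrational xi, so that
   q p0 - p q0 = ±1 and |q xi - p|, |q0 xi - p0| <= 1/q.  Everything rests on
   the n+1 polynomials  Q_m(T) = (qT - p)^m (q0 T - p0)^(n-m),  0 <= m <= n.
   Homogeneously, Q_m = L1^m L2^(n-m) for the unimodular linear forms
   L1 = qx - py, L2 = q0 x - p0 y, whose inverse substitution is again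
   integral: hence the Q_m form a Z-basis of Z[T]_{<=n}.  At xi, Q_m is the
   product of the forms qX + (q xi - p) and q0 X + (q0 xi - p0) in X = T - xi;
   bounding the coefficients of such products by Pascal's triangle gives
   |Q_m^[k](xi)| <= 2^n q^(2k-n), i.e. the basis lies in 2^n C(q).
   Conversely the coordinates of P in this basis are combinations of the
   P^[k](xi) with weights of size <= 2^n q^(n-2k); a nonzero P in lam C(q)
   has a nonzero integer coordinate, whence 1 <= (n+1) 2^n lam. *)

From Stdlib Require Import Reals ZArith Arith Lia Lra Classical.
Open Scope R_scope.

Lemma sumR_ext N f g : (forall i, (i < N)%nat -> f i = g i) -> sumR N f = sumR N g.
Proof. induction N; simpl; intros H; auto. rewrite IHN, H; auto. Qed.

Lemma sumR_plus N f g : sumR N (fun i => f i + g i) = sumR N f + sumR N g.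
Proof. induction N; simpl; [lra | rewrite IHN; lra]. Qed.

Lemma sumR_scal N c f : sumR N (fun i => c * f i) = c * sumR N f.
Proof. induction N; simpl; [lra | rewrite IHN; lra]. Qed.

Lemma sumR_scal_r N c f : sumR N (fun i => f i * c) = sumR N f * c.
Proof. induction N; simpl; [lra | rewrite IHN; lra]. Qed.

Lemma sumR_swap N M (f : nat -> nat -> R) :
  sumR N (fun i => sumR M (fun j => f i j)) = sumR M (fun j => sumR N (fun i => f i j)).
Proof.
  induction N; simpl.
  - induction M; simpl; [lra | rewrite <- IHM; lra].
  - rewrite IHN, <- sumR_plus. reflexivity.
Qed.

Lemma sumR_S N f : sumR (S N) f = sumR N f + f N.
Proof. reflexivity. Qed.

Lemma sumR_shift N f : sumR (S N) f = f 0%nat + sumR N (fun i => f (S i)).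
Proof. induction N; simpl in *; [lra | rewrite IHN; lra]. Qed.

Lemma sumR_zero N f : (forall i, (i < N)%nat -> f i = 0) -> sumR N f = 0.
Proof. induction N; simpl; intros H; auto. rewrite IHN, H; auto; lra. Qed.

Lemma sumR_abs N f : Rabs (sumR N f) <= sumR N (fun i => Rabs (f i)).
Proof.
  induction N; simpl.
  - rewrite Rabs_R0; lra.
  - eapply Rle_trans; [apply Rabs_triang | lra].
Qed.

Lemma sumR_le N f g : (forall i, (i < N)%nat -> f i <= g i) -> sumR N f <= sumR N g.
Proof.
  induction N; simpl; intros H; [lra |].
  assert (f N <= g N) by auto. assert (sumR N f <= sumR N g) by auto. lra.
Qed.

Lemma sumR_const N c : sumR N (fun _ => c) = INR N * c.
Proof. induction N; simpl sumR; [simpl; lra | rewrite IHN, S_INR; lra]. Qed.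

Lemma sumR_trunc M N f : (M <= N)%nat ->
  (forall i, (M <= i)%nat -> (i < N)%nat -> f i = 0) -> sumR N f = sumR M f.
Proof.
  induction N; intros HMN H.
  - replace M with 0%nat by lia. reflexivity.
  - destruct (Nat.eq_dec M (S N)) as [-> | HM]; [reflexivity |].
    simpl. rewrite IHN, H by (auto; lia). lra.
Qed.

Lemma sum_f_R0_sumR f n : sum_f_R0 f n = sumR (S n) f.
Proof. induction n; simpl in *; [lra | rewrite IHn; reflexivity]. Qed.

Lemma IZR_sumZ N f : IZR (sumZ N f) = sumR N (fun i => IZR (f i)).
Proof. induction N; simpl; auto. rewrite plus_IZR, IHN. reflexivity. Qed.

Fixpoint pascal (d i : nat) : R :=
  match d, i with
  | O, O => 1
  | O, S _ => 0
  | S _, O => 1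
  | S d', S i' => pascal d' i' + pascal d' (S i')
  end.

Lemma pascal_0_r d : pascal d 0 = 1.
Proof. destruct d; reflexivity. Qed.

Lemma pascal_le_pow2 d i : pascal d i <= 2 ^ d.
Proof.
  revert i; induction d; destruct i; simpl; try lra.
  - pose proof (pow_R1_Rle 2 d ltac:(lra)). lra.
  - pose proof (IHd i); pose proof (IHd (S i)); lra.
Qed.

Definition hom_eval (d : nat) (c : nat -> R) (u v : R) : R :=
  sumR (S d) (fun i => c i * u ^ i * v ^ (d - i)).

Definition supported (d : nat) (c : nat -> R) : Prop := forall i, (d < i)%nat -> c i = 0.

Lemma hom_eval_ext d c c' u v :
  (forall i, (i <= d)%nat -> c i = c' i) -> hom_eval d c u v = hom_eval d c' u v.
Proof. intros H. apply sumR_ext. intros i Hi. rewrite H by lia. reflexivity. Qed.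

Lemma hom_eval_lincomb d N (c : nat -> R) (w : nat -> nat -> R) u v :
  hom_eval d (fun j => sumR N (fun m => c m * w m j)) u v
  = sumR N (fun m => c m * hom_eval d (w m) u v).
Proof.
  unfold hom_eval.
  rewrite (sumR_ext _ _ (fun i => sumR N (fun m => c m * w m i * u ^ i * v ^ (d - i))))
    by (intros; rewrite <- !sumR_scal_r; reflexivity).
  rewrite sumR_swap. apply sumR_ext. intros.
  rewrite <- sumR_scal. apply sumR_ext. intros; ring.
Qed.

(** Multiplication by the linear form [al v + be u] on coefficient sequences. *)

Definition mul_lin (al be : R) (c : nat -> R) (i : nat) : R :=
  al * c i + be * match i with O => 0 | S i' => c i' end.

Definition unit_coeffs (i : nat) : R := if Nat.eqb i 0 then 1 else 0.

(* Coefficients of [(al v + be u)^m (ga v + de u)^k]. *)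
Definition two_forms (al be ga de : R) (m k : nat) : nat -> R :=
  Nat.iter m (mul_lin al be) (Nat.iter k (mul_lin ga de) unit_coeffs).

Lemma mul_lin_supported al be d c : supported d c -> supported (S d) (mul_lin al be c).
Proof.
  intros H [|i] Hi; [lia |]. unfold mul_lin. rewrite !H by lia. ring.
Qed.

Lemma hom_eval_mul_lin al be d c u v : supported d c ->
  hom_eval (S d) (mul_lin al be c) u v = (al * v + be * u) * hom_eval d c u v.
Proof.
  intros H. unfold hom_eval, mul_lin.
  rewrite (sumR_ext _ _ (fun i => al * c i * u ^ i * v ^ (S d - i) +
     be * match i with O => 0 | S i' => c i' end * u ^ i * v ^ (S d - i)))
    by (intros; ring).
  rewrite sumR_plus.
  replace (sumR (S (S d)) (fun i => al * c i * u ^ i * v ^ (S d - i)))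
    with (al * v * sumR (S d) (fun i => c i * u ^ i * v ^ (d - i))).
  2:{ rewrite (sumR_S (S d)), (H (S d)) by lia. rewrite <- sumR_scal.
      rewrite Rmult_0_r, !Rmult_0_l, Rplus_0_r.
      apply sumR_ext. intros i Hi. replace (S d - i)%nat with (S (d - i)) by lia.
      simpl. ring. }
  rewrite (sumR_shift (S d)), Rmult_0_r, !Rmult_0_l, Rplus_0_l.
  rewrite (sumR_ext (S d) (fun i => be * c i * u ^ S i * v ^ (S d - S i))
                     (fun i => be * u * (c i * u ^ i * v ^ (d - i))))
    by (intros; simpl; ring).
  rewrite sumR_scal. ring.
Qed.

Lemma iter_mul_lin al be m d c u v : supported d c ->
  supported (m + d) (Nat.iter m (mul_lin al be) c) /\
  hom_eval (m + d) (Nat.iter m (mul_lin al be) c) u v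
  = (al * v + be * u) ^ m * hom_eval d c u v.
Proof.
  intros H. induction m as [|m [IHs IHe]]; simpl.
  - split; [exact H | ring].
  - split; [now apply mul_lin_supported |].
    rewrite hom_eval_mul_lin, IHe by exact IHs. ring.
Qed.

Lemma hom_eval_two_forms al be ga de m k u v :
  hom_eval (m + k) (two_forms al be ga de m k) u v = (al * v + be * u) ^ m * (ga * v + de * u) ^ k.
Proof.
  assert (H0 : supported 0 unit_coeffs) by (intros [|i] Hi; [lia | reflexivity]).
  destruct (iter_mul_lin ga de k 0 unit_coeffs u v H0) as [Hs He].
  rewrite Nat.add_0_r in Hs, He.
  unfold two_forms. rewrite (proj2 (iter_mul_lin al be m k _ u v Hs)), He.
  unfold hom_eval, unit_coeffs. simpl. ring.
Qed.

(* Coefficient bound for products of linear forms [al v + be u] whose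
   coefficients satisfy [|al| <= r] and [|be| <= r w]: each factor multiplies
   the bound by [r] and moves one step down Pascal's triangle. *)
Lemma mul_lin_bound al be r w M d c :
  Rabs al <= r -> Rabs be <= r * w -> 0 <= w ->
  (forall i, Rabs (c i) <= M * pascal d i * w ^ i) ->
  forall i, Rabs (mul_lin al be c i) <= M * r * pascal (S d) i * w ^ i.
Proof.
  intros Hal Hbe Hw Hc [|i]; unfold mul_lin.
  - rewrite Rmult_0_r, Rplus_0_r, Rabs_mult, pascal_0_r.
    specialize (Hc 0%nat). rewrite pascal_0_r in Hc. simpl pow in *.
    eapply Rle_trans; [apply Rmult_le_compat; try apply Rabs_pos; eauto | right; ring].
  - eapply Rle_trans; [apply Rabs_triang |]. rewrite !Rabs_mult.
    assert (A1 : Rabs al * Rabs (c (S i)) <= r * (M * pascal d (S i) * w ^ S i))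
      by (apply Rmult_le_compat; try apply Rabs_pos; auto).
    assert (A2 : Rabs be * Rabs (c i) <= r * w * (M * pascal d i * w ^ i))
      by (apply Rmult_le_compat; try apply Rabs_pos; auto).
    simpl pascal. simpl pow in *. nra.
Qed.

Lemma iter_mul_lin_bound al be r w m M d c :
  Rabs al <= r -> Rabs be <= r * w -> 0 <= w ->
  (forall i, Rabs (c i) <= M * pascal d i * w ^ i) ->
  forall i, Rabs (Nat.iter m (mul_lin al be) c i) <= M * r ^ m * pascal (m + d) i * w ^ i.
Proof.
  intros Hal Hbe Hw Hc. induction m as [|m IH]; intros i.
  - simpl. rewrite Rmult_1_r. apply Hc.
  - replace (M * r ^ S m) with (M * r ^ m * r) by (simpl; ring).
    exact (mul_lin_bound al be r w (M * r ^ m) (m + d) _ Hal Hbe Hw IH i).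
Qed.

Lemma two_forms_bound al be ga de r1 r2 w m k :
  Rabs al <= r1 -> Rabs be <= r1 * w -> Rabs ga <= r2 -> Rabs de <= r2 * w -> 0 <= w ->
  forall i, Rabs (two_forms al be ga de m k i) <= r1 ^ m * r2 ^ k * pascal (m + k) i * w ^ i.
Proof.
  intros Hal Hbe Hga Hde Hw.
  assert (H0 : forall i, Rabs (unit_coeffs i) <= 1 * pascal 0 i * w ^ i).
  { intros [|i]; unfold unit_coeffs; simpl; rewrite ?Rabs_R1, ?Rabs_R0; lra. }
  pose proof (iter_mul_lin_bound ga de r2 w k 1 0 _ Hga Hde Hw H0) as Hk.
  rewrite Nat.add_0_r in Hk.
  intros i. unfold two_forms.
  replace (r1 ^ m * r2 ^ k) with (1 * r2 ^ k * r1 ^ m) by ring.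
  exact (iter_mul_lin_bound al be r1 w m _ k _ Hal Hbe Hw Hk i).
Qed.

(** The identity theorem: a polynomial vanishing at every nonzero real has
    only zero coefficients.  This is how identities between polynomials are
    transported to identities between their coefficient sequences. *)

Definition poly_eval (N : nat) (e : nat -> R) (u : R) : R := sumR N (fun i => e i * u ^ i).

Lemma hom_eval_poly_eval d c u : hom_eval d c u 1 = poly_eval (S d) c u.
Proof. apply sumR_ext. intros. rewrite pow1. ring. Qed.

Lemma poly_eval_shift N e u : poly_eval (S N) e u = e 0%nat + u * poly_eval N (fun i => e (S i)) u.
Proof.
  unfold poly_eval. rewrite sumR_shift, <- sumR_scal. simpl. f_equal; [ring |].
  apply sumR_ext. intros. simpl. ring.
Qed.

Lemma poly_eval_small N e u :
  Rabs u <= 1 -> Rabs (poly_eval N e u) <= sumR N (fun i => Rabs (e i)).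
Proof.
  intros Hu. eapply Rle_trans; [apply sumR_abs |]. apply sumR_le. intros i _.
  rewrite Rabs_mult, <- RPow_abs.
  assert (Rabs u ^ i <= 1) by (rewrite <- (pow1 i); apply pow_incr; split; auto; apply Rabs_pos).
  pose proof (pow_le (Rabs u) i (Rabs_pos u)). pose proof (Rabs_pos (e i)). nra.
Qed.

Lemma dominated_by_small_multiples a B :
  0 <= B -> (forall u, 0 < u <= 1 -> Rabs a <= u * B) -> a = 0.
Proof.
  intros HB H. apply NNPP. intros Ha. apply Rabs_pos_lt in Ha.
  set (u := Rmin 1 (Rabs a / (2 * (B + 1)))).
  assert (Hu : 0 < u <= 1).
  { split; [apply Rmin_glb_lt; [lra | apply Rdiv_lt_0_compat; lra] | apply Rmin_l]. }
  assert (Hu2 : u * (2 * (B + 1)) <= Rabs a).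
  { pose proof (Rmin_r 1 (Rabs a / (2 * (B + 1)))) as Hr. fold u in Hr.
    apply (Rmult_le_compat_r (2 * (B + 1))) in Hr; [| lra].
    unfold Rdiv in Hr. rewrite Rmult_assoc, Rinv_l in Hr by lra. lra. }
  specialize (H u Hu). nra.
Qed.

Lemma poly_eval_coeff0 N e : (forall u, u <> 0 -> poly_eval (S N) e u = 0) -> e 0%nat = 0.
Proof.
  intros H. apply (dominated_by_small_multiples _ (sumR N (fun i => Rabs (e (S i))))).
  - rewrite <- (Rmult_0_r (INR N)), <- sumR_const. apply sumR_le. intros; apply Rabs_pos.
  - intros u Hu. specialize (H u ltac:(lra)). rewrite poly_eval_shift in H.
    replace (e 0%nat) with (- (u * poly_eval N (fun i => e (S i)) u)) by lra.
    rewrite Rabs_Ropp, Rabs_mult, (Rabs_pos_eq u) by lra.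
    apply Rmult_le_compat_l; [lra |]. apply poly_eval_small. rewrite Rabs_pos_eq; lra.
Qed.

Lemma poly_eval_zero_coeffs N e :
  (forall u, u <> 0 -> poly_eval N e u = 0) -> forall i, (i < N)%nat -> e i = 0.
Proof.
  revert e; induction N as [|N IH]; intros e H i Hi; [lia |].
  assert (E0 : e 0%nat = 0) by (eapply poly_eval_coeff0; eauto).
  destruct i as [|i]; [exact E0 |].
  apply (IH (fun i => e (S i))); [| lia].
  intros u Hu. specialize (H u Hu). rewrite poly_eval_shift, E0, Rplus_0_l in H.
  apply Rmult_integral in H. lra.
Qed.

Lemma hom_eval_coeffs_unique d c c' :
  (forall u, hom_eval d c u 1 = hom_eval d c' u 1) -> forall i, (i <= d)%nat -> c i = c' i.
Proof.
  intros H i Hi.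
  enough (c i - c' i = 0) by lra.
  apply (poly_eval_zero_coeffs (S d) (fun i => c i - c' i)); [| lia].
  intros u _. specialize (H u). rewrite !hom_eval_poly_eval in H.
  unfold poly_eval in *.
  rewrite (sumR_ext _ _ (fun i => c i * u ^ i + -1 * (c' i * u ^ i))) by (intros; ring).
  rewrite sumR_plus, sumR_scal. lra.
Qed.

(** Homogeneous Taylor expansion at [xi]: the coefficients of a homogeneous
    polynomial in the variables [(x - xi y, y)] are its divided derivatives at [xi]. *)

Definition taylor_coeff (xi : R) (n : nat) (a : nat -> R) (k : nat) : R :=
  sumR (S n) (fun j => if Nat.leb k j then C j k * a j * xi ^ (j - k) else 0).

Lemma binomial_homogeneous j n (X Y y : R) : (j <= n)%nat ->
  (X + Y * y) ^ j * y ^ (n - j) =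
  sumR (S n) (fun k => (if Nat.leb k j then C j k * Y ^ (j - k) else 0) * X ^ k * y ^ (n - k)).
Proof.
  intros Hj. rewrite binomial, sum_f_R0_sumR, <- sumR_scal_r.
  rewrite (sumR_trunc (S j) (S n)); [| lia |].
  2:{ intros i H1 H2. replace (Nat.leb i j) with false by (symmetry; apply Nat.leb_gt; lia).
      ring. }
  apply sumR_ext. intros k Hk.
  replace (Nat.leb k j) with true by (symmetry; apply Nat.leb_le; lia).
  rewrite Rpow_mult_distr.
  replace (n - k)%nat with ((j - k) + (n - j))%nat by lia. rewrite pow_add. ring.
Qed.

Lemma hom_eval_taylor xi n a x y :
  hom_eval n a x y = hom_eval n (taylor_coeff xi n a) (x - xi * y) y.
Proof.
  unfold hom_eval at 1.
  rewrite (sumR_ext _ _ (fun j => a j * ((x - xi * y + xi * y) ^ j * y ^ (n - j))))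
    by (intros; replace (x - xi * y + xi * y) with x by ring; ring).
  rewrite (sumR_ext _ _ (fun j => sumR (S n) (fun k =>
     (if Nat.leb k j then C j k * a j * xi ^ (j - k) else 0) * (x - xi * y) ^ k * y ^ (n - k)))).
  2:{ intros j Hj. rewrite binomial_homogeneous by lia. rewrite <- sumR_scal.
      apply sumR_ext. intros k _. destruct (Nat.leb k j); ring. }
  rewrite sumR_swap. apply sumR_ext. intros k _.
  unfold taylor_coeff. rewrite <- !sumR_scal_r. reflexivity.
Qed.

(** The convergents [P/Q] (current) and [P0/Q0]
    (previous) satisfy [Q P0 - P Q0 = ±1] and [x = (P X + P0) / (Q X + Q0)]
    with [X > 1] the next complete quotient; this yields the approximation
    properties we need. *)

Lemma frac_part_irrational y : irrational y ->
  0 < y - IZR (Int_part y) < 1 /\ irrational (/ (y - IZR (Int_part y))).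
Proof.
  intros Hy. destruct (base_Int_part y) as [H1 H2].
  set (a := Int_part y) in *.
  assert (Hne : y - IZR a <> 0).
  { intros E. apply Hy. exists a, 1%Z. split; [lia |]. rewrite Rdiv_1_r. lra. }
  split; [lra |].
  intros [p [r [Hr E]]]. apply Hy.
  destruct (Z.eq_dec p 0) as [-> | Hp].
  { rewrite Rdiv_0_l in E. exfalso. exact (Rinv_neq_0_compat _ Hne E). }
  exists (a * p + r)%Z, p. split; auto.
  assert (IZR r <> 0) by (apply not_0_IZR; auto).
  assert (IZR p <> 0) by (apply not_0_IZR; auto).
  assert (E2 : y - IZR a = IZR r / IZR p).
  { rewrite <- (Rinv_inv (y - IZR a)), E. field. auto. }
  rewrite plus_IZR, mult_IZR. replace y with (IZR a + IZR r / IZR p) by lra.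
  field; auto.
Qed.

Lemma cf_complete_irrational x k : irrational x -> irrational (cf_complete x k).
Proof. intros H; induction k; simpl; auto. apply frac_part_irrational; auto. Qed.

Fixpoint cf_nums (x : R) (k : nat) : Z * Z :=
  match k with
  | O => (cf_partial x 0, 1%Z)
  | S k' => let (a, b) := cf_nums x k' in ((cf_partial x (S k') * a + b)%Z, a)
  end.

Lemma cf_invariant x k : irrational x ->
  let Q := fst (cf_denoms x k) in let Q0 := snd (cf_denoms x k) in
  let P := fst (cf_nums x k) in let P0 := snd (cf_nums x k) in
  let X := cf_complete x (S k) in
  (1 <= Q)%Z /\ (0 <= Q0 <= Q)%Z /\ (Q * P0 - P * Q0 = 1 \/ Q * P0 - P * Q0 = -1)%Z /\
  1 < X /\ x = (IZR P * X + IZR P0) / (IZR Q * X + IZR Q0).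
Proof.
  intros Hx. induction k as [|k IH]; intros Q Q0 P P0 X.
  - subst Q Q0 P P0 X. cbn [cf_denoms cf_nums fst snd cf_complete]. unfold cf_partial.
    cbn [cf_complete]. destruct (frac_part_irrational x Hx) as [[F1 F2] _].
    split; [lia | split; [lia | split; [lia | split]]].
    + rewrite <- Rinv_1. apply Rinv_lt_contravar; lra.
    + field; lra.
  - destruct IH as [H1 [H2 [H3 [H4 H5]]]]. revert H1 H2 H3 H4 H5.
    subst Q Q0 P P0 X. cbn [cf_denoms cf_nums].
    destruct (cf_denoms x k) as [q1 q0]; destruct (cf_nums x k) as [p1 p0]; cbn [fst snd].
    set (Y := cf_complete x (S k)). unfold cf_partial. fold Y.
    change (cf_complete x (S (S k))) with (/ (Y - IZR (Int_part Y))).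
    intros H1 H2 H3 H4 H5.
    destruct (frac_part_irrational Y (cf_complete_irrational x (S k) Hx)) as [[F1 F2] _].
    destruct (base_Int_part Y) as [B1 B2].
    set (a := Int_part Y) in *.
    assert (Ha : (0 < a)%Z) by (apply lt_IZR; lra).
    split; [nia | split; [nia | split; [lia | split]]].
    + rewrite <- Rinv_1. apply Rinv_lt_contravar; lra.
    + rewrite H5, !plus_IZR, !mult_IZR.
      set (Z' := / (Y - IZR a)).
      assert (Hy : Y = IZR a + / Z') by (unfold Z'; rewrite Rinv_inv; ring).
      assert (0 < Z') by (apply Rinv_0_lt_compat; lra).
      assert (1 <= IZR a) by (apply IZR_le; lia).
      assert (1 <= IZR q1) by (apply IZR_le; lia).
      assert (0 <= IZR q0) by (apply IZR_le; lia).
      assert (0 < / Z') by (apply Rinv_0_lt_compat; lra).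
      rewrite Hy.
      assert (0 < IZR q1 * (IZR a + / Z') + IZR q0) by nra.
      assert (0 < IZR a * IZR q1 + IZR q0) by nra.
      assert (0 < (IZR a * IZR q1 + IZR q0) * Z' + IZR q1) by nra.
      field. repeat split; lra.
Qed.

Lemma approx_from_complete_quotient x X P Q P0 Q0 :
  1 <= Q -> 0 <= Q0 <= Q -> Rabs (Q * P0 - P * Q0) = 1 -> 1 < X ->
  x = (P * X + P0) / (Q * X + Q0) ->
  Rabs (Q * x - P) <= / Q /\ Rabs (Q0 * x - P0) <= / Q.
Proof.
  intros HQ HQ0 Hdet HX Hx.
  assert (Hd : 0 < Q * X + Q0) by nra.
  assert (E1 : Q * x - P = (Q * P0 - P * Q0) / (Q * X + Q0)) by (rewrite Hx; field; lra).
  assert (E2 : Q0 * x - P0 = - (Q * P0 - P * Q0) * X / (Q * X + Q0))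
    by (rewrite Hx; field; lra).
  split.
  - rewrite E1. unfold Rdiv. rewrite Rabs_mult, Rabs_inv, Hdet, (Rabs_pos_eq (_ + _)) by lra.
    rewrite Rmult_1_l. apply Rinv_le_contravar; nra.
  - rewrite E2. unfold Rdiv.
    rewrite !Rabs_mult, Rabs_inv, Rabs_Ropp, Hdet, (Rabs_pos_eq (_ + _)), (Rabs_pos_eq X) by lra.
    apply (Rmult_le_reg_r (Q * X + Q0)); [lra |].
    field_simplify; try lra. apply (Rmult_le_reg_r Q); [lra |]. field_simplify; nra.
Qed.

Definition convergent_data (x : R) (p q p0 q0 : Z) : Prop :=
  (1 <= q)%Z /\ (0 <= q0 <= q)%Z /\ (q * p0 - p * q0 = 1 \/ q * p0 - p * q0 = -1)%Z /\
  Rabs (IZR q * x - IZR p) <= / IZR q /\ Rabs (IZR q0 * x - IZR p0) <= / IZR q.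

Lemma convergent_data_exists x q : irrational x -> is_convergent_denominator x q ->
  exists p p0 q0 : Z, convergent_data x p q p0 q0.
Proof.
  intros Hx [k Hk]. pose proof (cf_invariant x k Hx) as H. cbv zeta in H.
  unfold convergent_denominator in Hk.
  destruct (cf_denoms x k) as [Q Q0], (cf_nums x k) as [P P0]. cbn [fst snd] in *.
  subst Q. destruct H as [H1 [H2 [H3 [H4 H5]]]].
  exists P, P0, Q0. unfold convergent_data. do 3 (split; auto).
  apply (approx_from_complete_quotient _ (cf_complete x (S k))); auto.
  - apply IZR_le; lia.
  - split; apply IZR_le; lia.
  - rewrite <- !mult_IZR, <- minus_IZR, Rabs_Zabs. destruct H3 as [-> | ->]; reflexivity.
Qed.

Definition coeffsR (a : nat -> Z) : nat -> R := fun j => IZR (a j).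

Definition mul_linZ (al be : Z) (c : nat -> Z) (i : nat) : Z :=
  (al * c i + be * match i with O => 0 | S i' => c i' end)%Z.

Definition unit_coeffsZ (i : nat) : Z := if Nat.eqb i 0 then 1%Z else 0%Z.

Definition two_formsZ (al be ga de : Z) (m k : nat) : nat -> Z :=
  Nat.iter m (mul_linZ al be) (Nat.iter k (mul_linZ ga de) unit_coeffsZ).

Lemma iter_mul_linZ_IZR al be m c cR : (forall i, IZR (c i) = cR i) ->
  forall i, IZR (Nat.iter m (mul_linZ al be) c i) = Nat.iter m (mul_lin (IZR al) (IZR be)) cR i.
Proof.
  intros Hc. induction m as [|m IH]; intros i; simpl; [apply Hc |].
  unfold mul_linZ, mul_lin. rewrite plus_IZR, !mult_IZR, IH.
  destruct i; [reflexivity | rewrite IH; reflexivity].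
Qed.

Lemma two_formsZ_IZR al be ga de m k i :
  IZR (two_formsZ al be ga de m k i) = two_forms (IZR al) (IZR be) (IZR ga) (IZR de) m k i.
Proof.
  unfold two_formsZ, two_forms.
  apply iter_mul_linZ_IZR, iter_mul_linZ_IZR.
  intros [|j]; reflexivity.
Qed.

Lemma hom_eval_two_formsZ al be ga de m k u v :
  hom_eval (m + k) (coeffsR (two_formsZ al be ga de m k)) u v
  = (IZR al * v + IZR be * u) ^ m * (IZR ga * v + IZR de * u) ^ k.
Proof.
  rewrite <- hom_eval_two_forms. apply hom_eval_ext. intros i _. apply two_formsZ_IZR.
Qed.

Lemma powerRZ_2k_sub_n (x : R) k n : x <> 0 ->
  powerRZ x (2 * Z.of_nat k - Z.of_nat n) = (x ^ 2) ^ k * / x ^ n.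
Proof.
  intros Hx. replace (2 * Z.of_nat k - Z.of_nat n)%Z with (Z.of_nat (2 * k) + - Z.of_nat n)%Z
    by lia.
  rewrite powerRZ_add, powerRZ_neg', <- !pow_powerRZ, pow_mult by auto. reflexivity.
Qed.

(** The basis attached to consecutive convergents [p/q], [p0/q0] of [xi]:
    [Q_m = (qT - p)^m (q0 T - p0)^(n-m)], or homogeneously [L1^m L2^(n-m)]. *)

Section ConvergentBasis.

Variables (xi : R) (n : nat) (p q p0 q0 : Z).
Hypothesis Hq : (1 <= q)%Z.
Hypothesis Hq0 : (0 <= q0 <= q)%Z.
Hypothesis Hdet : (q * p0 - p * q0 = 1 \/ q * p0 - p * q0 = -1)%Z.
Hypothesis Happrox : Rabs (IZR q * xi - IZR p) <= / IZR q.
Hypothesis Happrox0 : Rabs (IZR q0 * xi - IZR p0) <= / IZR q.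

Let det : Z := (q * p0 - p * q0)%Z.
Let eps : R := IZR det.

Lemma eps_sq : eps * eps = 1.
Proof. unfold eps, det. destruct Hdet as [-> | ->]; simpl; lra. Qed.

Lemma Rabs_eps : Rabs eps = 1.
Proof. unfold eps, det. rewrite Rabs_Zabs. destruct Hdet as [-> | ->]; reflexivity. Qed.

Let L1 (x y : R) : R := IZR q * x - IZR p * y.
Let L2 (x y : R) : R := IZR q0 * x - IZR p0 * y.
Let M1 (u v : R) : R := eps * (IZR p0 * u - IZR p * v).
Let M2 (u v : R) : R := eps * (IZR q0 * u - IZR q * v).

Lemma eps_expand : eps = IZR q * IZR p0 - IZR p * IZR q0.
Proof. unfold eps, det. rewrite minus_IZR, !mult_IZR. reflexivity. Qed.

(* Both substitutions multiply by [eps * eps = 1]. *)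
Lemma forms_after_inverse u v : L1 (M1 u v) (M2 u v) = u /\ L2 (M1 u v) (M2 u v) = v.
Proof.
  unfold L1, L2, M1, M2. split.
  - transitivity (eps * (IZR q * IZR p0 - IZR p * IZR q0) * u); [ring |].
    rewrite <- eps_expand, eps_sq; ring.
  - transitivity (eps * (IZR q * IZR p0 - IZR p * IZR q0) * v); [ring |].
    rewrite <- eps_expand, eps_sq; ring.
Qed.

Lemma inverse_after_forms x y : M1 (L1 x y) (L2 x y) = x /\ M2 (L1 x y) (L2 x y) = y.
Proof.
  unfold L1, L2, M1, M2. split.
  - transitivity (eps * (IZR q * IZR p0 - IZR p * IZR q0) * x); [ring |].
    rewrite <- eps_expand, eps_sq; ring.
  - transitivity (eps * (IZR q * IZR p0 - IZR p * IZR q0) * y); [ring |].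
    rewrite <- eps_expand, eps_sq; ring.
Qed.

Definition conv_basis (m : nat) : nat -> Z := two_formsZ (- p) q (- p0) q0 m (n - m).

Lemma hom_eval_conv_basis m x y : (m <= n)%nat ->
  hom_eval n (coeffsR (conv_basis m)) x y = L1 x y ^ m * L2 x y ^ (n - m).
Proof.
  intros Hm. unfold conv_basis.
  replace n with (m + (n - m))%nat at 1 by lia.
  rewrite hom_eval_two_formsZ, !opp_IZR. unfold L1, L2. f_equal; f_equal; ring.
Qed.

(* Coefficients of [M1^j M2^(n-j)]: the inverse change of basis. *)
Definition inverse_basis (j : nat) : nat -> Z :=
  two_formsZ (- (det * p)) (det * p0) (- (det * q)) (det * q0) j (n - j).

Lemma hom_eval_inverse_basis j u v : (j <= n)%nat ->
  hom_eval n (coeffsR (inverse_basis j)) u v = M1 u v ^ j * M2 u v ^ (n - j).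
Proof.
  intros Hj. unfold inverse_basis.
  replace n with (j + (n - j))%nat at 1 by lia.
  rewrite hom_eval_two_formsZ, !opp_IZR, !mult_IZR. unfold M1, M2. fold eps.
  f_equal; f_equal; ring.
Qed.

Definition basis_coords (a : nat -> Z) (m : nat) : Z :=
  sumZ (S n) (fun j => (a j * inverse_basis j m)%Z).

Lemma hom_eval_basis_coords a u v :
  hom_eval n (coeffsR (basis_coords a)) u v = hom_eval n (coeffsR a) (M1 u v) (M2 u v).
Proof.
  rewrite (hom_eval_ext _ _ (fun m => sumR (S n) (fun j => IZR (a j) * IZR (inverse_basis j m)))).
  2:{ intros i _. unfold coeffsR, basis_coords. rewrite IZR_sumZ.
      apply sumR_ext. intros; apply mult_IZR. }
  rewrite hom_eval_lincomb. apply sumR_ext. intros j Hj.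
  change (fun i => IZR (inverse_basis j i)) with (coeffsR (inverse_basis j)).
  rewrite hom_eval_inverse_basis by lia. unfold coeffsR. ring.
Qed.

Lemma hom_eval_basis_comb (c : nat -> R) x y :
  hom_eval n (fun j => sumR (S n) (fun m => c m * IZR (conv_basis m j))) x y
  = hom_eval n c (L1 x y) (L2 x y).
Proof.
  rewrite hom_eval_lincomb. apply sumR_ext. intros m Hm.
  change (fun j => IZR (conv_basis m j)) with (coeffsR (conv_basis m)).
  rewrite hom_eval_conv_basis by lia. ring.
Qed.

Lemma conv_basis_lin_indep : lin_indep n (S n) conv_basis.
Proof.
  intros c Hc m Hm.
  apply (hom_eval_coeffs_unique n c (fun _ => 0)); [| lia].
  intros u.
  transitivity (hom_eval n (fun j => sumR (S n) (fun m => c m * IZR (conv_basis m j)))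
                  (M1 u 1) (M2 u 1)).
  - rewrite hom_eval_basis_comb. destruct (forms_after_inverse u 1) as [-> ->]. reflexivity.
  - unfold hom_eval. rewrite !sumR_zero; auto; intros i Hi; [ring |].
    rewrite Hc by lia. ring.
Qed.

Lemma conv_basis_spans (a : nat -> Z) :
  forall j, (j <= n)%nat -> a j = sumZ (S n) (fun m => (basis_coords a m * conv_basis m j)%Z).
Proof.
  intros j Hj. apply eq_IZR. rewrite IZR_sumZ. symmetry.
  apply (hom_eval_coeffs_unique n
           (fun j => sumR (S n) (fun m => IZR (basis_coords a m * conv_basis m j))) (coeffsR a));
    [| exact Hj].
  intros x.
  rewrite (hom_eval_ext _ _ (fun j => sumR (S n) (fun m =>
             coeffsR (basis_coords a) m * IZR (conv_basis m j))))
    by (intros; apply sumR_ext; intros; apply mult_IZR).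
  rewrite hom_eval_basis_comb, hom_eval_basis_coords.
  destruct (inverse_after_forms x 1) as [-> ->]. reflexivity.
Qed.

Let aR : R := IZR q * xi - IZR p.
Let bR : R := IZR q0 * xi - IZR p0.

Lemma q_ge1 : 1 <= IZR q.
Proof. apply IZR_le; lia. Qed.

Lemma q0_bounds : 0 <= IZR q0 <= IZR q.
Proof. split; apply IZR_le; lia. Qed.

Lemma taylor_conv_basis m k : (m <= n)%nat -> (k <= n)%nat ->
  taylor_coeff xi n (coeffsR (conv_basis m)) k = two_forms aR (IZR q) bR (IZR q0) m (n - m) k.
Proof.
  intros Hm Hk. apply (hom_eval_coeffs_unique n); auto. intros X.
  rewrite <- (Rplus_minus_r X (xi * 1)) at 1. rewrite <- hom_eval_taylor.
  rewrite hom_eval_conv_basis by auto.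
  replace n with (m + (n - m))%nat at 2 by lia. rewrite hom_eval_two_forms.
  unfold L1, L2, aR, bR. f_equal; f_equal; ring.
Qed.

(* Each [Q_m] lies in [2^n C(q)]: its Taylor coefficients at [xi] are those of
   [(q X + aR)^m (q0 X + bR)^(n-m)] with [|aR|, |bR| <= 1/q]. *)
Lemma conv_basis_in_body m : (m <= n)%nat -> in_scaled_body xi n q (2 ^ n) (conv_basis m).
Proof.
  intros Hm k Hk. pose proof q_ge1. pose proof q0_bounds.
  change (divderiv xi n (conv_basis m) k) with (taylor_coeff xi n (coeffsR (conv_basis m)) k).
  rewrite taylor_conv_basis, powerRZ_2k_sub_n by (auto; lra).
  eapply Rle_trans.
  { assert (Eq : / IZR q * IZR q ^ 2 = IZR q) by (field; lra).
    apply (two_forms_bound _ _ _ _ (/ IZR q) (/ IZR q) (IZR q ^ 2));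
      rewrite ?Eq, ?(Rabs_pos_eq (IZR q)), ?(Rabs_pos_eq (IZR q0)) by lra;
      auto; try lra.
    apply pow_le; lra. }
  rewrite <- pow_add, pow_inv. replace (m + (n - m))%nat with n by lia.
  pose proof (pascal_le_pow2 n k).
  assert (0 <= (IZR q ^ 2) ^ k * / IZR q ^ n)
    by (apply Rmult_le_pos; [apply pow_le, pow_le | left; apply Rinv_0_lt_compat, pow_lt]; lra).
  replace (/ IZR q ^ n * pascal n k * (IZR q ^ 2) ^ k)
    with (pascal n k * ((IZR q ^ 2) ^ k * / IZR q ^ n)) by ring.
  apply Rmult_le_compat_r; lra.
Qed.

(* Coefficients of [(M1 - xi M2)^k M2^(n-k)]: they express the basis
   coordinates through the divided derivatives. *)
Definition coord_weight (k : nat) : nat -> R :=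
  two_forms (eps * aR) (- (eps * bR)) (- (eps * IZR q)) (eps * IZR q0) k (n - k).

Lemma hom_eval_coord_weight k u v : (k <= n)%nat ->
  hom_eval n (coord_weight k) u v = (M1 u v - xi * M2 u v) ^ k * M2 u v ^ (n - k).
Proof.
  intros Hk. unfold coord_weight.
  replace n with (k + (n - k))%nat at 1 by lia. rewrite hom_eval_two_forms.
  unfold M1, M2, aR, bR. f_equal; f_equal; ring.
Qed.

Lemma coords_from_taylor a m : (m <= n)%nat ->
  IZR (basis_coords a m)
  = sumR (S n) (fun k => taylor_coeff xi n (coeffsR a) k * coord_weight k m).
Proof.
  intros Hm.
  apply (hom_eval_coeffs_unique n (coeffsR (basis_coords a))
           (fun i => sumR (S n) (fun k => taylor_coeff xi n (coeffsR a) k * coord_weight k i)));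
    [| exact Hm].
  intros u. rewrite hom_eval_basis_coords, (hom_eval_taylor xi), hom_eval_lincomb.
  apply sumR_ext. intros k Hk. rewrite hom_eval_coord_weight by lia. ring.
Qed.

Lemma coord_weight_bound k i : (k <= n)%nat ->
  Rabs (coord_weight k i) <= 2 ^ n * ((/ IZR q) ^ k * IZR q ^ (n - k)).
Proof.
  intros Hk. pose proof q_ge1. pose proof q0_bounds. pose proof Rabs_eps.
  eapply Rle_trans.
  { apply (two_forms_bound _ _ _ _ (/ IZR q) (IZR q) 1);
      rewrite ?Rmult_1_r, ?Rabs_Ropp, ?Rabs_mult, ?Rabs_eps, ?Rmult_1_l,
        ?(Rabs_pos_eq (IZR q)), ?(Rabs_pos_eq (IZR q0)) by lra; auto; lra. }
  rewrite pow1, Rmult_1_r. replace (k + (n - k))%nat with n by lia.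
  pose proof (pascal_le_pow2 n i).
  assert (0 <= (/ IZR q) ^ k * IZR q ^ (n - k))
    by (apply Rmult_le_pos; apply pow_le; [left; apply Rinv_0_lt_compat |]; lra).
  nra.
Qed.

(* The scalings of the body and of the weights compensate exactly. *)
Lemma body_weight_cancel k : (k <= n)%nat ->
  (IZR q ^ 2) ^ k * / IZR q ^ n * ((/ IZR q) ^ k * IZR q ^ (n - k)) = 1.
Proof.
  intros Hk. pose proof q_ge1.
  rewrite pow_inv, <- pow_mult.
  replace (IZR q ^ n) with (IZR q ^ (n - k) * IZR q ^ k) by (rewrite <- pow_add; f_equal; lia).
  replace (2 * k)%nat with (k + k)%nat by lia. rewrite pow_add.
  assert (IZR q ^ k <> 0) by (apply pow_nonzero; lra).
  assert (IZR q ^ (n - k) <> 0) by (apply pow_nonzero; lra).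
  field. auto.
Qed.

Lemma nonzero_coord (a : nat -> Z) : (exists j, (j <= n)%nat /\ a j <> 0%Z) ->
  exists m, (m <= n)%nat /\ basis_coords a m <> 0%Z.
Proof.
  intros [j [Hj Haj]]. apply NNPP. intros Hno. apply Haj.
  rewrite (conv_basis_spans a j Hj). apply eq_IZR. rewrite IZR_sumZ.
  apply sumR_zero. intros m Hm.
  assert (basis_coords a m = 0%Z) by (apply NNPP; intros Hc; apply Hno; exists m; split; [lia | auto]).
  rewrite H. reflexivity.
Qed.

(* A nonzero integer polynomial in [lam C(q)] has a nonzero integer coordinate
   [sum_k P^[k](xi) W_k(m)], each term being at most [lam 2^n]. *)
Lemma nonzero_in_body_lower_bound lam (a : nat -> Z) :
  in_scaled_body xi n q lam a -> (exists j, (j <= n)%nat /\ a j <> 0%Z) ->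
  1 <= lam * (INR (S n) * 2 ^ n).
Proof.
  intros Hin Hnz. pose proof q_ge1.
  destruct (nonzero_coord a Hnz) as [m [Hm Hcm]].
  assert (H1 : 1 <= Rabs (IZR (basis_coords a m))) by (rewrite Rabs_Zabs; apply IZR_le; lia).
  rewrite coords_from_taylor in H1 by exact Hm.
  eapply Rle_trans; [exact H1 |]. eapply Rle_trans; [apply sumR_abs |].
  replace (lam * (INR (S n) * 2 ^ n)) with (sumR (S n) (fun _ => lam * 2 ^ n))
    by (rewrite sumR_const; ring).
  apply sumR_le. intros k Hk. rewrite Rabs_mult.
  assert (Ht := Hin k ltac:(lia)). rewrite powerRZ_2k_sub_n in Ht by lra.
  eapply Rle_trans.
  { apply Rmult_le_compat; try apply Rabs_pos; [exact Ht | apply coord_weight_bound; lia]. }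
  right. rewrite <- (Rmult_1_r (lam * 2 ^ n)), <- (body_weight_cancel k) by lia. ring.
Qed.

End ConvergentBasis.

Lemma lin_indep_one_nonzero n fam :
  lin_indep n 1 fam -> exists j, (j <= n)%nat /\ fam 0%nat j <> 0%Z.
Proof.
  intros Hind. apply NNPP. intros Hno.
  assert (Hzero : forall j, (j <= n)%nat -> sumR 1 (fun m => 1 * IZR (fam m j)) = 0).
  { intros j Hj. simpl.
    assert (fam 0%nat j = 0%Z) by (apply NNPP; intros Hne; apply Hno; exists j; auto).
    rewrite H. ring. }
  pose proof (Hind (fun _ => 1) Hzero 0%nat ltac:(lia)). lra.
Qed.

Lemma weaken_first_minimum_bound n lam :
  0 < lam -> 1 <= lam * (INR (S n) * 2 ^ n) -> / (2 ^ (n * n) * INR (fact (n + 1))) <= lam.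
Proof.
  intros Hlam H.
  assert (A1 : INR (S n) <= INR (fact (n + 1))).
  { apply le_INR. replace (n + 1)%nat with (S n) by lia. simpl.
    pose proof (lt_O_fact n). nia. }
  assert (A2 : 2 ^ n <= 2 ^ (n * n)) by (apply Rle_pow; [lra | nia]).
  assert (P1 : 0 < INR (S n)) by (apply lt_0_INR; lia).
  assert (P2 : 0 < 2 ^ n) by (apply pow_lt; lra).
  assert (Y : INR (S n) * 2 ^ n <= 2 ^ (n * n) * INR (fact (n + 1)))
    by (rewrite Rmult_comm; apply Rmult_le_compat; lra).
  apply Rle_trans with (/ (INR (S n) * 2 ^ n)).
  - apply Rinv_le_contravar; nra.
  - apply (Rmult_le_reg_r (INR (S n) * 2 ^ n)); [nra |].
    rewrite Rinv_l by nra. lra.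
Qed.

Theorem proposition1 (xi : R) (n : nat) (q : Z) :
  irrational xi -> (1 <= n)%nat -> is_convergent_denominator xi q ->
  (forall lam, successive_minimum xi n q (S n) lam -> lam <= 2 ^ n) /\
  (forall lam, successive_minimum xi n q 1 lam ->
     / (2 ^ (n * n) * INR (fact (n + 1))) <= lam) /\
  (exists fam : nat -> nat -> Z,
     Z_basis n fam /\ forall m, (m <= n)%nat -> in_scaled_body xi n q (2 ^ n) (fam m)).
Proof.
  intros Hirr _ Hconv.
  destruct (convergent_data_exists xi q Hirr Hconv) as [p [p0 [q0 [Hq [Hq0 [Hdet [Ha Ha0]]]]]]].
  set (basis := conv_basis n p q p0 q0).
  assert (Hindep : lin_indep n (S n) basis) by (apply conv_basis_lin_indep; auto).
  assert (Hbody : forall m, (m <= n)%nat -> in_scaled_body xi n q (2 ^ n) (basis m))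
    by (intros; apply conv_basis_in_body; auto).
  split; [| split].
  - (* [2^n C(q)] contains the n+1 independent points of the basis. *)
    intros lam [Hlow _]. apply Hlow. split; [apply pow_lt; lra |].
    exists basis. split; [exact Hindep | intros m Hm; apply Hbody; lia].
  - (* Every [lam C(q)] containing a nonzero lattice point is large. *)
    intros lam [_ Hgreatest]. apply Hgreatest. intros lam' [Hlam' [fam [Hind Hin]]].
    apply weaken_first_minimum_bound; [exact Hlam' |].
    apply (nonzero_in_body_lower_bound xi n p q p0 q0 Hq Hq0 Hdet Ha Ha0 lam' (fam 0%nat)).
    + apply Hin. lia.
    + apply lin_indep_one_nonzero. exact Hind.
  - exists basis. split; [split |].
    + exact Hindep.
    + intros a. exists (basis_coords n p q p0 q0 a). apply conv_basis_spans. exact Hdet.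
    + exact Hbody.
Qed.
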